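(* For every graph $H$ on the $8$ vertices of $K_8$ with $|E(H)|\le5$, we have $q(K_8\setminus H)=2$.
   Context: $K_n\setminus H$ denotes the graph obtained from the complete graph $K_n$ by deleting the edges of $H$, where $H$ is a graph on the same $n$ vertices. For a graph $G$ on $n$ vertices, $S(G)$ is the set of real symmetric $n\times n$ matrices $A$ with $a_{ij}\ne0$ ($i\ne j$) iff $ij\in E(G)$, diagonal unrestricted, and $q(G)$ is the minimum number of distinct eigenvalues of a matrix in $S(G)$. *)

From HB Require Import structures.
From mathcomp Require Export all_boot all_order all_algebra.
From mathcomp Require Export reals.
Set Implicit Arguments. Unset Strict Implicit. Unset Printing Implicit Defensive.
Import Order.TTheory GRing.Theory Num.Theory.
Local Open Scope ring_scope.

Definition is_graph n (E : {set {set 'I_n}}) : bool :=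
  [forall e in E, #|e| == 2%N].

Definition Kn_minus n (H : {set {set 'I_n}}) : {set {set 'I_n}} :=
  [set e : {set 'I_n} | (#|e| == 2%N) && (e \notin H)].

Definition SG (R : realType) n (G : {set {set 'I_n}}) (A : 'M[R]_n) : Prop :=
  A^T = A /\
  forall i j : 'I_n, i != j -> ((A i j != 0) = ([set i; j] \in G)).

Definition num_distinct_eig (R : realType) n (A : 'M[R]_n) (k : nat) : Prop :=
  exists s : seq R, [/\ uniq s, size s = k & forall a : R, eigenvalue A a = (a \in s)].

Definition q_eq (R : realType) n (G : {set {set 'I_n}}) (k : nat) : Prop :=
  (exists A : 'M[R]_n, SG G A /\ num_distinct_eig A k) /\
  (forall (A : 'M[R]_n) (j : nat), SG G A -> num_distinct_eig A j -> (k <= j)%N).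

(* Lower bound: a real symmetric matrix with a single eigenvalue a equals a%:M, so it has
   no nonzero off-diagonal entry, whereas K_8 \ H has edges.
   Upper bound: if A *m A = c *: A with c != 0, every eigenvalue of A lies in {0, c}.  Up to
   relabelling there are 44 graphs with at most 5 edges on 8 vertices, and for each of them we
   give a symmetric integer matrix M with M^2 = cM whose off-diagonal zeros are exactly its
   edges.  That no graph is missing is checked by computation: adding any missing edge to a
   listed graph with fewer than 5 edges gives, after a recorded relabelling, a listed graph. *)

(* Imported before mathcomp, which then rebinds %N to nat_scope. *)
From Stdlib Require Import BinInt.
From mathcomp Require Import sesquilinear spectral.
From mathcomp.real_closed Require Import complex.
From mathcomp Require Import zify.
From mathcomp.zify Require Import ssrZ.
Set Implicit Arguments. Unset Strict Implicit. Unset Printing Implicit Defensive.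
Import Order.TTheory GRing.Theory Num.Theory.

Local Open Scope ring_scope.

(** * Linear algebra *)

Lemma eigenvalue_scaled_idempotent (F : fieldType) n (A : 'M[F]_n) (c : F) :
  A *m A = c *: A -> A != 0 -> A != c%:M ->
  forall a, eigenvalue A a = (a \in [:: 0; c]).
Proof.
move=> AA A0 Anc a; apply/idP/idP.
- case/eigenvalueP => v vA v0.
  have vAA : v *m (A *m A) = (a * a) *: v by rewrite mulmxA vA -scalemxAl vA scalerA.
  have : (a * a - c * a) *: v = 0.
    by rewrite scalerBl -vAA AA -scalemxAr vA scalerA subrr.
  move/eqP; rewrite scaler_eq0 (negbTE v0) orbF -mulrBl mulf_eq0 subr_eq0.
  by rewrite !inE orbC.
- have eig_rowspace (B : 'M[F]_n) b : B != 0 -> B *m A = b *: B -> eigenvalue A b.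
    case/rowV0Pn => _ /submxP[w ->] wB0 BA; apply/eigenvalueP; exists (w *m B) => //.
    by rewrite -mulmxA BA scalemxAr.
  rewrite !inE => /orP[] /eqP ->.
  + apply: (eig_rowspace (A - c%:M)); first by rewrite subr_eq0.
    by rewrite mulmxBl AA mul_scalar_mx subrr scale0r.
  + exact: eig_rowspace A0 AA.
Qed.

Section RealSymmetric.
Variables (R : realType) (n : nat) (A : 'M[R]_n.+1).
Hypothesis symA : A^T = A.

Let Ac := map_mx (real_complex R) A.
Let P := spectralmx Ac.
Let d := spectral_diag Ac.

Let Ac_hermsym : Ac \is hermsymmx.
Proof.
apply: realsym_hermsym.
  apply/is_hermitianmxP; rewrite expr0 scale1r.
  by apply/matrixP => i j; rewrite !mxE /= -{1}symA mxE.
by apply/mxOverP => i j; rewrite mxE; apply/complex_realP; exists (A i j).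
Qed.

Let Ac_spectral : Ac = invmx P *m diag_mx d *m P.
Proof. exact/orthomx_spectralP/hermitian_normalmx/Ac_hermsym. Qed.

Let d_real i : d 0 i = real_complex R (complex.Re (d 0 i)).
Proof.
rewrite RRe_real //.
by move/mxOverP: (hermitian_spectral_diag_real Ac_hermsym) => /(_ 0 i).
Qed.

Let eigenvalue_spectral_diag i : eigenvalue A (complex.Re (d 0 i)).
Proof.
have Pu : P \in unitmx by apply: spectral_unit.
suff : root (map_poly (real_complex R) (char_poly A)) (d 0 i).
  by rewrite {1}d_real fmorph_root -eigenvalue_root_char.
rewrite map_char_poly -eigenvalue_root_char.
apply/eigenvalueP; exists (row i P).
  by rewrite -row_mul -/Ac Ac_spectral !mulmxA mulmxV // mul1mx row_mul row_diag_mx -scalemxAl -rowE.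
apply: contraNneq (oner_neq0 (R[i]%C)) => Pi0.
have := congr1 (mulmx^~ (invmx P)) Pi0; rewrite /= -row_mul mulmxV // mul0mx.
by move=> /rowP/(_ i) /eqP; rewrite !mxE !eqxx.
Qed.

Lemma realsym_has_eigenvalue : exists a, eigenvalue A a.
Proof. by exists (complex.Re (d 0 0)). Qed.

Lemma realsym_single_eigenvalue_scalar a :
  (forall b, eigenvalue A b -> b = a) -> A = a%:M.
Proof.
move=> eigA; apply: (@map_mx_inj _ _ (real_complex R)); rewrite -/Ac Ac_spectral.
have -> : diag_mx d = (real_complex R a)%:M.
  by apply/matrixP => i j; rewrite !mxE d_real (eigA _ (eigenvalue_spectral_diag i)).
by rewrite map_scalar_mx mul_mx_scalar -scalemxAl mulVmx ?spectral_unit // scalemx1.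
Qed.
End RealSymmetric.

Lemma num_distinct_eig_nonscalar (R : realType) n (A : 'M[R]_n.+1) k :
  A^T = A -> ~~ is_scalar_mx A -> num_distinct_eig A k -> (1 < k)%N.
Proof.
move=> symA nsA [[|a [|b s]] [_ <- eigA]] //.
  by have [a] := realsym_has_eigenvalue symA; rewrite eigA.
case/negP: nsA; apply/is_scalar_mxP; exists a.
by apply: realsym_single_eigenvalue_scalar => // b; rewrite eigA inE => /eqP.
Qed.

Lemma SG_edge_nonscalar (R : realType) n (G : {set {set 'I_n}}) (A : 'M[R]_n) i j :
  SG G A -> i != j -> [set i; j] \in G -> ~~ is_scalar_mx A.
Proof.
move=> [_ patA] ij ijG; apply/is_scalar_mxP => -[a Aa].
by move: (patA i j ij); rewrite ijG Aa mxE (negbTE ij) mulr0n eqxx.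
Qed.

Lemma q_eq2_scaled_idempotent (R : realType) n (G : {set {set 'I_n.+1}})
    (A : 'M[R]_n.+1) (c : R) i j :
  SG G A -> c != 0 -> A *m A = c *: A -> i != j -> [set i; j] \in G -> q_eq R G 2.
Proof.
move=> SGA c0 AA ij ijG.
have nsA := SG_edge_nonscalar SGA ij ijG.
split=> [|B k [symB patB]]; last first.
  by apply: num_distinct_eig_nonscalar; rewrite ?(SG_edge_nonscalar (conj symB patB) ij).
exists A; split=> //; exists [:: 0; c]; split=> //; first by rewrite /= inE eq_sym c0.
by apply: eigenvalue_scaled_idempotent => //; apply: contraNneq nsA => ->;
  rewrite ?mx0_is_scalar ?scalar_mx_is_scalar.
Qed.

Lemma mxsub_mul_inj (R : pzSemiRingType) n (f : 'I_n -> 'I_n) (A B : 'M[R]_n) :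
  injective f -> mxsub f f A *m mxsub f f B = mxsub f f (A *m B).
Proof.
move=> finj; apply/matrixP => i j; rewrite !mxE [RHS](reindex_inj finj).
by apply: eq_bigr => k _; rewrite !mxE.
Qed.

Definition zr (R : numDomainType) (z : Z) : R := (int_of_Z z)%:~R.

Lemma zrD (R : numDomainType) (a b : Z) : zr R (Z.add a b) = zr R a + zr R b.
Proof. by rewrite /zr -intrD -(raddfD int_of_Z). Qed.

Lemma zrM (R : numDomainType) (a b : Z) : zr R (Z.mul a b) = zr R a * zr R b.
Proof. by rewrite /zr -intrM -(rmorphM int_of_Z). Qed.

Lemma zr_eq0 (R : numDomainType) (a : Z) : (zr R a == 0) = (a == Z0).
Proof. by rewrite /zr intr_eq0 -(inj_eq (can_inj int_of_ZK)). Qed.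

Lemma zr_foldr (R : numDomainType) (g : nat -> Z) s :
  zr R (foldr (fun k => Z.add (g k)) Z0 s) = \sum_(k <- s) zr R (g k).
Proof. by elim: s => [|k s IHs]; rewrite ?big_nil ?big_cons //= zrD IHs. Qed.

Local Close Scope ring_scope.

(** * Graphs on eight vertices *)

Lemma eq_set2 (T : finType) (i j k l : T) :
  ([set i; j] == [set k; l]) = ((i == k) && (j == l) || (i == l) && (j == k)).
Proof.
apply/eqP/idP => [E | /orP[] /andP[/eqP-> /eqP->] //]; last exact: setUC.
have := set21 i j; have := set22 i j; rewrite E !in_set2.
have := set21 k l; have := set22 k l; rewrite -E !in_set2.
by do 4 case/orP=> /eqP ?; subst; rewrite ?eqxx ?orbT.
Qed.

Lemma exists_non_neighbour n (H : {set {set 'I_n.+1}}) :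
  (#|H| < n)%N -> exists2 j, j != ord0 & [set ord0; j] \notin H.
Proof.
move=> Hn; apply/exists_inP; rewrite -negb_forall_in.
apply: contraTN Hn => /forall_inP allH; rewrite -leqNgt.
have inj_edge0 : injective (fun j : 'I_n.+1 => [set ord0; j]).
  by move=> j k /eqP; rewrite eq_set2 eqxx /= => /orP[/eqP | /andP[/eqP <- /eqP]].
have {1}-> : n = #|[set~ (ord0 : 'I_n.+1)]| by rewrite cardsC1 card_ord.
rewrite -(card_imset _ inj_edge0); apply/subset_leq_card/subsetP => e /imsetP[j].
by rewrite !inE => /allH + ->.
Qed.

Definition pairs8 : seq (nat * nat) :=
  [seq (i, j) | i <- iota 0 8, j <- iota i.+1 (7 - i)].

Definition edge_index (i j : nat) : nat := index (minn i j, maxn i j) pairs8.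

Definition adj (bs : seq bool) (i j : nat) : bool := nth false bs (edge_index i j).

Definition set_edge (bs : seq bool) (i j : nat) : seq bool :=
  set_nth false bs (edge_index i j) true.

Definition rel_code (E : nat -> nat -> bool) : seq bool := [seq E p.1 p.2 | p <- pairs8].

Definition graph_code (H : {set {set 'I_8}}) : seq bool :=
  rel_code (fun i j => [set inord i; inord j] \in H).

Lemma mem_pairs8 (i j : 'I_8) : i != j -> (minn i j, maxn i j) \in pairs8.
Proof.
move=> ij; apply/allpairsPdep; exists (minn i j), (maxn i j).
rewrite !mem_iota /=.
have := ltn_ord i; have := ltn_ord j; move: ij; rewrite -val_eqE /=.
by split=> //; lia.
Qed.

Lemma edge_index_lt (i j : 'I_8) : i != j -> edge_index i j < 28.
Proof. by move=> ij; rewrite [28]/(size pairs8) index_mem mem_pairs8. Qed.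

Lemma edge_index_eq (i j k l : 'I_8) : i != j -> k != l ->
  (edge_index i j == edge_index k l) = ((i == k) && (j == l) || (i == l) && (j == k)).
Proof.
move=> ij kl; rewrite (inj_in_eq (@index_inj _ (0, 0) pairs8)) ?mem_pairs8 // xpair_eqE.
move: ij kl; rewrite -!val_eqE /=.
lia.
Qed.

Lemma adj_rel_code (E : nat -> nat -> bool) (i j : 'I_8) :
  (forall a b : 'I_8, E a b = E b a) -> i != j -> adj (rel_code E) i j = E i j.
Proof.
move=> Esym ij; rewrite /adj (nth_map (0, 0)) ?index_mem ?mem_pairs8 //.
by rewrite nth_index ?mem_pairs8 //=; case: leqP.
Qed.

Lemma adj_graph_code H (i j : 'I_8) :
  i != j -> adj (graph_code H) i j = ([set i; j] \in H).
Proof. by move=> ij; rewrite adj_rel_code ?inord_val // => a b; rewrite setUC. Qed.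

Lemma adj_set_edge bs (i j k l : 'I_8) : i != j -> k != l ->
  adj (set_edge bs k l) i j = ((i == k) && (j == l) || (i == l) && (j == k)) || adj bs i j.
Proof. by move=> ij kl; rewrite /adj nth_set_nth /= edge_index_eq //; case: ifP. Qed.

Definition graph_iso (bs cs : seq bool) (f : 'I_8 -> 'I_8) : Prop :=
  injective f /\ forall i j : 'I_8, i != j -> adj bs i j = adj cs (f i) (f j).

Lemma graph_iso_comp bs cs ds f g :
  graph_iso bs cs f -> graph_iso cs ds g -> graph_iso bs ds (g \o f).
Proof.
move=> [finj isof] [ginj isog]; split=> [|i j ij]; first exact: inj_comp.
by rewrite isof // isog // inj_eq.
Qed.

Lemma graph_iso_add_edge H cs f (a b : 'I_8) :
  a != b -> graph_iso (graph_code H) cs f ->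
  graph_iso (graph_code ([set a; b] |: H)) (set_edge cs (f a) (f b)) f.
Proof.
move=> ab [finj isoH]; split=> // i j ij.
rewrite adj_graph_code // in_setU1 eq_set2 -adj_graph_code // isoH //.
by rewrite adj_set_edge ?inj_eq.
Qed.

Definition iso_check (bs cs : seq bool) (t : seq nat) : bool :=
  [&& size t == 8, uniq t, all (fun x => x < 8) t &
      all (fun i => all (fun j =>
        (i == j) || (adj bs i j == adj cs (nth 0 t i) (nth 0 t j))) (iota 0 8)) (iota 0 8)].

Definition relabel (t : seq nat) (i : 'I_8) : 'I_8 := inord (nth 0 t i).

Lemma iso_checkP bs cs t : iso_check bs cs t -> graph_iso bs cs (relabel t).
Proof.
move=> /and4P[/eqP t8 ut /allP tlt /allP adjt].
have relabelE (i : 'I_8) : relabel t i = nth 0 t i :> nat.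
  by rewrite inordK // tlt // mem_nth // t8.
split=> [i j /(congr1 val) | i j ij].
  by rewrite /= !relabelE => /eqP; rewrite nth_uniq ?t8 // => /eqP/val_inj.
have := adjt i; rewrite mem_iota ltn_ord => /(_ isT) /allP/(_ j).
by rewrite mem_iota ltn_ord val_eqE (negbTE ij) !relabelE => /(_ isT) /eqP.
Qed.

(** * The certificate *)

(* One entry (c, M) per class of graphs with at most 5 edges on 8 vertices: M is symmetric,
   M^2 = cM, and the off-diagonal zeros of M are the edges of the class representative. *)
Open Scope Z_scope.
Definition class_mats : seq (Z * seq (seq Z)) := [::
(35, [:: [:: 9; 3; (-3); 6; (-9); 3; 3; (-9)];
     [:: 3; 1; (-1); 2; (-3); 1; 1; (-3)];
     [:: (-3); (-1); 1; (-2); 3; (-1); (-1); 3];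
     [:: 6; 2; (-2); 4; (-6); 2; 2; (-6)];
     [:: (-9); (-3); 3; (-6); 9; (-3); (-3); 9];
     [:: 3; 1; (-1); 2; (-3); 1; 1; (-3)];
     [:: 3; 1; (-1); 2; (-3); 1; 1; (-3)];
     [:: (-9); (-3); 3; (-6); 9; (-3); (-3); 9]]);
(163433528800, [:: [:: 39754101600; 0; 39754101600; 39754101600; (-13251367200); 13251367200; 26502734400; 26502734400];
     [:: 0; 120489506809; 20334900744; 4447697850; (-40564982079); (-46757190339); (-29857110336); (-4220683425)];
     [:: 39754101600; 20334900744; 124460132704; (-37290243600); 1596656136; 8465870376; 31771636224; 19558063800];
     [:: 39754101600; 4447697850; (-37290243600); 119635166500; (-18938812950); (-12321129150); 26502734400; 32190180150];
     [:: (-13251367200); (-40564982079); 1596656136; (-18938812950); 76175909449; (-53723076091); 38585871616; (-9462857225)];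
     [:: 13251367200; (-46757190339); 8465870376; (-12321129150); (-53723076091); 105640295569; (-22779166144); 10720082075];
     [:: 26502734400; (-29857110336); 31771636224; 26502734400; 38585871616; (-22779166144); 49281900544; 17668489600];
     [:: 26502734400; (-4220683425); 19558063800; 32190180150; (-9462857225); 10720082075; 17668489600; 18297102025]]);
(17460, [:: [:: 3645; 0; 0; (-4050); 2430; 3645; 3645; 1215];
     [:: 0; 1552; (-2328); 2328; (-2328); 1552; 2328; 776];
     [:: 0; (-2328); 3492; (-3492); 3492; (-2328); (-3492); (-1164)];
     [:: (-4050); 2328; (-3492); 7992; (-6192); (-1722); (-558); (-186)];
     [:: 2430; (-2328); 3492; (-6192); 5112; 102; (-1062); (-354)];
     [:: 3645; 1552; (-2328); (-1722); 102; 5197; 5973; 1991];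
     [:: 3645; 2328; (-3492); (-558); (-1062); 5973; 7137; 2379];
     [:: 1215; 776; (-1164); (-186); (-354); 1991; 2379; 793]]);
(12254620, [:: [:: 8460985; 0; (-2713200); 3938985; 1356600; (-130815); (-43605); (-2713200)];
     [:: 0; 7041664; (-3756060); (-2450924); 2450924; 1616244; 2504040; 1305136];
     [:: (-2713200); (-3756060); 4701060; 0; (-813960); 3124800; (-1234800); (-1445220)];
     [:: 3938985; (-2450924); 0; 6389909; (-2450924); 1488061; 1312995; 2450924];
     [:: 1356600; 2450924; (-813960); (-2450924); 2857904; 1229984; (-406980); (-3264884)];
     [:: (-130815); 1616244; 3124800; 1488061; 1229984; 10204489; 2078655; (-691964)];
     [:: (-43605); 2504040; (-1234800); 1312995; (-406980); 2078655; 2210485; 2862720];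
     [:: (-2713200); 1305136; (-1445220); 2450924; (-3264884); (-691964); 2862720; 7151984]]);
(23832, [:: [:: 20191; 0; 0; 0; (-1655); 993; (-4634); (-6951)];
     [:: 0; 72; 72; (-144); 1152; 576; (-72); (-144)];
     [:: 0; 72; 72; (-144); 1152; 576; (-72); (-144)];
     [:: 0; (-144); (-144); 288; (-2304); (-1152); 144; 288];
     [:: (-1655); 1152; 1152; (-2304); 22735; 279; (-1814); (-3297)];
     [:: 993; 576; 576; (-1152); 279; 23475; 1410; 1827];
     [:: (-4634); (-72); (-72); 144; (-1814); 1410; 1396; 2130];
     [:: (-6951); (-144); (-144); 288; (-3297); 1827; 2130; 3267]]);
(143685, [:: [:: 15965; 0; 0; (-31930); 15965; 15965; 15965; 15965];
     [:: 0; 10044; 0; 8370; 26784; 15066; (-10044); (-15066)];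
     [:: 0; 0; 18540; 9270; (-18540); 27810; 27810; (-18540)];
     [:: (-31930); 8370; 9270; 75470; (-18880); (-5470); (-26395); (-53755)];
     [:: 15965; 26784; (-18540); (-18880); 105929; 28331; (-38629); (-5671)];
     [:: 15965; 15066; 27810; (-5470); 28331; 80279; 42614; (-34444)];
     [:: 15965; (-10044); 27810; (-26395); (-38629); 42614; 67724; 3221];
     [:: 15965; (-15066); (-18540); (-53755); (-5671); (-34444); 3221; 57104]]);
(1868078735754, [:: [:: 877555185738; 0; 0; 640506814794; 626560569756; 79255490094; 59980192074; (-237766470282)];
     [:: 0; 1800623336358; (-151671889908); 0; 65002238532; (-19132697430); (-292510073394); 91125791988];
     [:: 0; (-151671889908); 522583466118; 169825339614; (-345268156632); 195103987932; (-484197370524); (-509476018842)];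
     [:: 640506814794; 0; 169825339614; 1425192400660; (-322070416328); (-91508990600); (-68119796532); 274526971800];
     [:: 626560569756; 65002238532; (-345268156632); (-322070416328); 1168682131102; 84802923754; 328816972806; (-286909890528)];
     [:: 79255490094; (-19132697430); 195103987932; (-91508990600); 84802923754; 1799859778591; (-128897164029); 214223220204];
     [:: 59980192074; (-292510073394); (-484197370524); (-68119796532); 328816972806; (-128897164029); 566051201055; 532946528784];
     [:: (-237766470282); 91125791988; (-509476018842); 274526971800; (-286909890528); 214223220204; 532946528784; 1179846179148]]);
(235092, [:: [:: 140140; 0; 0; 78364; 51480; 20592; 61776; 16588];
     [:: 0; 184128; 48498; (-27126); 42744; (-60006); 11508; 27126];
     [:: 0; 48498; 25893; (-4521); 42744; 7809; (-33702); 4521];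
     [:: 78364; (-27126); (-4521); 82885; 0; 13563; (-9042); 73843];
     [:: 51480; 42744; 42744; 0; 128388; 59904; (-34008); (-51480)];
     [:: 20592; (-60006); 7809; 13563; 59904; 68925; (-49278); (-34155)];
     [:: 61776; 11508; (-33702); (-9042); (-34008); (-49278); 165348; (-52734)];
     [:: 16588; 27126; 4521; 73843; (-51480); (-34155); (-52734); 144661]]);
(985320, [:: [:: 951076; 0; 144900; 17136; 38640; 62832; (-56168); (-51800)];
     [:: 0; 193545; (-140760); (-246330); 123165; 140760; (-17595); (-193545)];
     [:: 144900; (-140760); 310500; 0; (-57960); (-281520); 281520; 82800];
     [:: 17136; (-246330); 0; 531216; (-246330); 141372; (-126378); 289170];
     [:: 38640; 123165; (-57960); (-246330); 731745; 0; (-41055); 321195];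
     [:: 62832; 140760; (-281520); 141372; 0; 799884; 158304; 16320];
     [:: (-56168); (-17595); 281520; (-126378); (-41055); 158304; 832609; 41395];
     [:: (-51800); (-193545); 82800; 289170; 321195; 16320; 41395; 576025]]);
(91322, [:: [:: 21348; 0; 0; 0; 0; (-34394); 11860; (-13046)];
     [:: 0; 15092; 7546; 22638; (-22638); (-3234); (-1078); 7546];
     [:: 0; 7546; 3773; 11319; (-11319); (-1617); (-539); 3773];
     [:: 0; 22638; 11319; 33957; (-33957); (-4851); (-1617); 11319];
     [:: 0; (-22638); (-11319); (-33957); 33957; 4851; 1617; (-11319)];
     [:: (-34394); (-3234); (-1617); (-4851); 4851; 61179; 1417; 24475];
     [:: 11860; (-1078); (-539); (-1617); 1617; 1417; 87841; 12507];
     [:: (-13046); 7546; 3773; 11319; (-11319); 24475; 12507; 16819]]);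
(7755, [:: [:: 1551; 0; 0; 0; (-1551); 1551; (-1551); (-1551)];
     [:: 0; 495; 0; 1320; 1155; 165; (-495); (-495)];
     [:: 0; 0; 940; (-1410); 1410; 1410; 470; (-470)];
     [:: 0; 1320; (-1410); 5635; 965; (-1675); (-2025); (-615)];
     [:: (-1551); 1155; 1410; 965; 6361; 949; 1101; (-309)];
     [:: 1551; 165; 1410; (-1675); 949; 3721; (-1011); (-2421)];
     [:: (-1551); (-495); 470; (-2025); 1101; (-1011); 2281; 1811];
     [:: (-1551); (-495); (-470); (-615); (-309); (-2421); 1811; 2281]]);
(910, [:: [:: 70; 0; 0; 0; (-70); 70; 70; 210];
     [:: 0; 117; (-234); (-39); 0; 156; 78; (-78)];
     [:: 0; (-234); 538; (-62); 140; (-312); (-16); 156];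
     [:: 0; (-39); (-62); 293; (-280); (-52); (-306); 26];
     [:: (-70); 0; 140; (-280); 350; (-70); 210; (-210)];
     [:: 70; 156; (-312); (-52); (-70); 278; 174; 106];
     [:: 70; 78; (-16); (-306); 210; 174; 402; 158];
     [:: 210; (-78); 156; 26; (-210); 106; 158; 682]]);
(9318820, [:: [:: 6132791; 0; 0; 0; 1397823; 3777900; 1599311; 868917];
     [:: 0; 2037960; 3220110; 420690; 1426350; (-652680); (-406260); 1290930];
     [:: 0; 3220110; 5156505; 413475; 2139525; (-1305360); 43290; 2153955];
     [:: 0; 420690; 413475; 1008065; 713175; 870240; (-2596290); (-152255)];
     [:: 1397823; 1426350; 2139525; 713175; 5382094; 0; (-28527); (-3480294)];
     [:: 3777900; (-652680); (-1305360); 870240; 0; 3823960; (-1855140); 640920];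
     [:: 1599311; (-406260); 43290; (-2596290); (-28527); (-1855140); 7625675; (-59805)];
     [:: 868917; 1290930; 2153955; (-152255); (-3480294); 640920; (-59805); 6108230]]);
(138008867316836250, [:: [:: 69004433658418125; 0; 0; (-21259698520198125); 33152071962975000; (-44528577802973080); (-10413758525424440); 33456488161936000];
     [:: 0; 69004433658418125; 0; (-45711935279715000); (-31013228610525000); (-23769914258885560); 25773250202200045; (-21930372518348000)];
     [:: 0; 0; 69004433658418125; (-34140613008225000); 20880458228293125; 43931440310447600; 25541496417161800; 24035336176967500];
     [:: (-21259698520198125); (-45711935279715000); (-34140613008225000); 53723174993578125; 0; 7729744177575000; (-26501980037400000); (-7671625800300000)];
     [:: 33152071962975000; (-31013228610525000); 20880458228293125; 0; 36184251181168125; 2583540855126000; (-8857854360432000); 33202973652187500];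
     [:: (-44528577802973080); (-23769914258885560); 43931440310447600; 7729744177575000; 2583540855126000; 64891113155804544; 14102813151817992; 1266877652040000];
     [:: (-10413758525424440); 25773250202200045; 25541496417161800; (-26501980037400000); (-8857854360432000); 14102813151817992; 20651931423613581; (-4343580521280000)];
     [:: 33456488161936000; (-21930372518348000); 24035336176967500; (-7671625800300000); 33202973652187500; 1266877652040000; (-4343580521280000); 31562830221090000]]);
(572, [:: [:: 88; 0; 0; (-44); 88; 132; 88; 88];
     [:: 0; 52; (-78); 0; 78; (-52); 78; (-78)];
     [:: 0; (-78); 117; 0; (-117); 78; (-117); 117];
     [:: (-44); 0; 0; 22; (-44); (-66); (-44); (-44)];
     [:: 88; 78; (-117); (-44); 205; 54; 205; (-29)];
     [:: 132; (-52); 78; (-66); 54; 250; 54; 210];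
     [:: 88; 78; (-117); (-44); 205; 54; 205; (-29)];
     [:: 88; (-78); 117; (-44); (-29); 210; (-29); 205]]);
(184300, [:: [:: 1900; 0; 0; (-17100); 3800; 1900; (-5700); (-1900)];
     [:: 0; 178771; 16587; 0; (-14744); (-7372); (-16587); 12901];
     [:: 0; 16587; 89143; (-29100); 0; (-7372); 85457; (-1843)];
     [:: (-17100); 0; (-29100); 163600; (-34200); (-17100); 22200; 17100];
     [:: 3800; (-14744); 0; (-34200); 14972; (-25688); (-11400); (-18544)];
     [:: 1900; (-7372); (-7372); (-17100); (-25688); 149340; 1672; 64448];
     [:: (-5700); (-16587); 85457; 22200; (-11400); 1672; 106243; 7543];
     [:: (-1900); 12901; (-1843); 17100; (-18544); 64448; 7543; 33231]]);
(112301490, [:: [:: 48621234; 0; 0; (-38365920); 31708656; 10159200; 18394128; 13314528];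
     [:: 0; 94615455; (-27253890); 0; 10824240; (-8021535); 5218830; (-26867310)];
     [:: 0; (-27253890); 61221386; 14973532; 17048178; (-16043070); 30011494; (-26674020)];
     [:: (-38365920); 0; 14973532; 64500794; 18496716; 12191040; (-25137712); (-16259700)];
     [:: 31708656; 10824240; 17048178; 18496716; 89873028; 0; (-13243776); 9216522];
     [:: 10159200; (-8021535); (-16043070); 12191040; 0; 105549855; 8339010; (-8339010)];
     [:: 18394128; 5218830; 30011494; (-25137712); (-13243776); 8339010; 52306232; (-31543854)];
     [:: 13314528; (-26867310); (-26674020); (-16259700); 9216522; (-8339010); (-31543854); 44819466]]);
(1356810, [:: [:: 434434; 0; 0; 271362; 229320; (-515970); (-8918); (-90454)];
     [:: 0; 786183; 133551; 62622; 415350; 138450; (-138450); 464766];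
     [:: 0; 133551; 1094607; (-187866); 249210; 83070; (-83070); (-397458)];
     [:: 271362; 62622; (-187866); 855834; 0; 0; (-542724); (-146118)];
     [:: 229320; 415350; 249210; 0; 402090; (-260910); 31590; 166140];
     [:: (-515970); 138450; 83070; 0; (-260910); 801645; (-285675); 55380];
     [:: (-8918); (-138450); (-83070); (-542724); 31590; (-285675); 475501; 125528];
     [:: (-90454); 464766; (-397458); (-146118); 166140; 55380; 125528; 576946]]);
(11760, [:: [:: 7644; 0; 0; 4704; (-1764); (-588); 2352; (-588)];
     [:: 0; 3900; 3450; (-480); (-1470); (-2880); (-1470); (-2430)];
     [:: 0; 3450; 7575; 480; (-2205); 2880; (-2205); (-1245)];
     [:: 4704; (-480); 480; 3376; 0; 1440; 1568; (-1088)];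
     [:: (-1764); (-1470); (-2205); 0; 6027; 1764; 735; (-4557)];
     [:: (-588); (-2880); 2880; 1440; 1764; 9228; 0; 1116];
     [:: 2352; (-1470); (-2205); 1568; 735; 0; 1519; (-49)];
     [:: (-588); (-2430); (-1245); (-1088); (-4557); 1116; (-49); 7771]]);
(425, [:: [:: 357; 0; (-17); 85; 83; 25; 68; 68];
     [:: 0; 357; (-85); (-17); 25; (-83); (-68); 68];
     [:: (-17); (-85); 102; 0; (-48); 90; (-68); 102];
     [:: 85; (-17); 0; 102; 90; 48; (-102); (-68)];
     [:: 83; 25; (-48); 90; 102; 0; (-58); (-108)];
     [:: 25; (-83); 90; 48; 0; 102; (-108); 58];
     [:: 68; (-68); (-68); (-102); (-58); (-108); 289; 0];
     [:: 68; 68; 102; (-68); (-108); 58; 0; 289]]);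
(3206, [:: [:: 229; 0; 0; 0; 0; 0; 687; 458];
     [:: 0; 504; (-756); 252; 252; (-756); (-168); 252];
     [:: 0; (-756); 1134; (-378); (-378); 1134; 252; (-378)];
     [:: 0; 252; (-378); 126; 126; (-378); (-84); 126];
     [:: 0; 252; (-378); 126; 126; (-378); (-84); 126];
     [:: 0; (-756); 1134; (-378); (-378); 1134; 252; (-378)];
     [:: 687; (-168); 252; (-84); (-84); 252; 2117; 1290];
     [:: 458; 252; (-378); 126; 126; (-378); 1290; 1042]]);
(380, [:: [:: 95; 0; 0; 0; 0; (-95); (-95); (-95)];
     [:: 0; 20; 0; (-50); (-30); (-50); 30; 20];
     [:: 0; 0; 19; 57; (-38); (-19); 38; (-19)];
     [:: 0; (-50); 57; 296; (-39); 68; 39; (-107)];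
     [:: 0; (-30); (-38); (-39); 121; 113; (-121); 8];
     [:: (-95); (-50); (-19); 68; 113; 239; (-18); 64];
     [:: (-95); 30; 38; 39; (-121); (-18); 216; 87];
     [:: (-95); 20; (-19); (-107); 8; 64; 87; 134]]);
(86579790, [:: [:: 46940850; 0; 0; 0; 0; (-9388170); 28164510; (-31293900)];
     [:: 0; 4765860; (-12708960); (-7148790); 7943100; 0; 7943100; 7148790];
     [:: 0; (-12708960); 60760150; 28019970; (-21181600); (-8956530); 5687990; 7806150];
     [:: 0; (-7148790); 28019970; 13708695; (-11914650); (-2985510); (-2958120); (-1766655)];
     [:: 0; 7943100; (-21181600); (-11914650); 21109390; (-23612670); 5367610; 11914650];
     [:: (-9388170); 0; (-8956530); (-2985510); (-23612670); 75701154; 9023238; (-2697750)];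
     [:: 28164510; 7943100; 5687990; (-2958120); 5367610; 9023238; 64877686; 20007900];
     [:: (-31293900); 7148790; 7806150; (-1766655); 11914650; (-2697750); 20007900; 58455375]]);
(7225, [:: [:: 1156; 0; 0; 0; 0; (-578); 2312; (-1156)];
     [:: 0; 2258; 323; 918; 2283; (-1836); (-918); (-918)];
     [:: 0; 323; 4913; (-867); 2448; 1734; 867; 867];
     [:: 0; 918; (-867); 578; 493; (-1156); (-578); (-578)];
     [:: 0; 2283; 2448; 493; 3233; (-986); (-493); (-493)];
     [:: (-578); (-1836); 1734; (-1156); (-986); 2601; 0; 1734];
     [:: 2312; (-918); 867; (-578); (-493); 0; 5202; (-1734)];
     [:: (-1156); (-918); 867; (-578); (-493); 1734; (-1734); 1734]]);
(8184366, [:: [:: 1235376; 0; 0; 0; 926532; 1853064; 926532; (-1853064)];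
     [:: 0; 6840074; 0; 0; (-434918); (-2135052); 1067526; (-1818748)];
     [:: 0; 0; 3159648; 3159648; 526608; (-263304); (-2106432); (-1053216)];
     [:: 0; 0; 3159648; 3159648; 526608; (-263304); (-2106432); (-1053216)];
     [:: 926532; (-434918); 526608; 526608; 7622741; (-789138); 1411353; 253414];
     [:: 1853064; (-2135052); (-263304); (-263304); (-789138); 4224906; 853650; (-2691828)];
     [:: 926532; 1067526; (-2106432); (-2106432); 1411353; 853650; 2455029; (-687654)];
     [:: (-1853064); (-1818748); (-1053216); (-1053216); 253414; (-2691828); (-687654); 4040042]]);
(105210, [:: [:: 7515; 0; 0; 0; 7515; 15030; (-15030); 15030];
     [:: 0; 39746; 0; (-42084); 0; (-14028); 9352; 23380];
     [:: 0; 0; 4536; 3780; (-18144); (-4536); (-6804); 6804];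
     [:: 0; (-42084); 3780; 66276; (-15120); 17262; 15372; 5670];
     [:: 7515; 0; (-18144); (-15120); 80091; 33174; 12186; (-12186)];
     [:: 15030; (-14028); (-4536); 17262; 33174; 41610; (-16242); 23256];
     [:: (-15030); 9352; (-6804); 15372; 12186; (-16242); 94040; 6494];
     [:: 15030; 23380; 6804; 5670; (-12186); 23256; 6494; 87026]]);
(44635752, [:: [:: 14878584; 0; 0; 0; (-9919056); (-14878584); 9919056; 4959528];
     [:: 0; 14081517; 0; 5579469; (-12753072); 5579469; 2656890; (-14081517)];
     [:: 0; 0; 9859752; 14424480; 5614560; (-8179920); (-4888800); (-3533040)];
     [:: 0; 5579469; 14424480; 37633869; 0; 2374029; 1542618; 4036851];
     [:: (-9919056); (-12753072); 5614560; 0; 35099912; (-1310064); 5204608; (-3653920)];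
     [:: (-14878584); 5579469; (-8179920); 2374029; (-1310064); 34253541; 3324426; 4220139];
     [:: 9919056; 2656890; (-4888800); 1542618; 5204608; 3324426; 40411100; (-925370)];
     [:: 4959528; (-14081517); (-3533040); 4036851; (-3653920); 4220139; (-925370); 36960485]]);
(1300118440774757658808573561250, [:: [:: 650059220387378829404286780625; 0; 0; 0; (-561731126243387934279080859375); (-87417189161918391793494015000); (-137020272626014269577787341000); 283934520177635021197223562000];
     [:: 0; 650059220387378829404286780625; 0; 83568788289881822104908529500; (-64601493718478947795148265000); 81019033352815497666502190625; 607202721822004965976563396240; 190159579012662992611051146820];
     [:: 0; 0; 650059220387378829404286780625; (-431629715742437376330175306000); 96336469198084725945864270000; (-455393538002000599821888337500); 99587559719112463325151166680; 98443418756200176949844298615];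
     [:: 0; 83568788289881822104908529500; (-431629715742437376330175306000); 297338992858148446875602890000; (-72270879166013326065006300000); 312790034242250186236695937500; 11934675138237987748452840000; (-40918886188244529423266880000)];
     [:: (-561731126243387934279080859375); (-64601493718478947795148265000); 96336469198084725945864270000; (-72270879166013326065006300000); 506101469159724002131365140625; 0; 72818385826361911868529075000; (-249663037118955126406385400000)];
     [:: (-87417189161918391793494015000); 81019033352815497666502190625; (-455393538002000599821888337500); 312790034242250186236695937500; 0; 340875286790528018748264530625; 24338357190723298701701646000; (-83445796082479881262977072000)];
     [:: (-137020272626014269577787341000); 607202721822004965976563396240; 99587559719112463325151166680; 11934675138237987748452840000; 72818385826361911868529075000; 24338357190723298701701646000; 611309508559170732957572631424; 132856154839570616388734225832];
     [:: 283934520177635021197223562000; 190159579012662992611051146820; 98443418756200176949844298615; (-40918886188244529423266880000); (-249663037118955126406385400000); (-83445796082479881262977072000); 132856154839570616388734225832; 194552403794565287500055149201]]);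
(283822, [:: [:: 34144; 0; 0; 0; (-76824); 17072; 34144; 34144];
     [:: 0; 116109; 77406; (-38703); 0; 0; (-77406); 77406];
     [:: 0; 77406; 54530; (-43358); 11704; 5852; (-34048); 57456];
     [:: 0; (-38703); (-43358); 118237; (-70224); (-35112); (-79534); (-60914)];
     [:: (-76824); 0; 11704; (-70224); 219670; (-15004); (-6600); (-53416)];
     [:: 17072; 0; 5852; (-35112); (-15004); 20240; 52184; 28776];
     [:: 34144; (-77406); (-34048); (-79534); (-6600); 52184; 191084; 17652];
     [:: 34144; 77406; 57456; (-60914); (-53416); 28776; 17652; 97452]]);
(1039368, [:: [:: 16764; 0; 0; 0; (-8382); (-125730); 25146; (-25146)];
     [:: 0; 31496; (-94488); 94488; 0; 31496; 62992; (-94488)];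
     [:: 0; (-94488); 283464; (-283464); 0; (-94488); (-188976); 283464];
     [:: 0; 94488; (-283464); 291648; (-73656); 94488; 139872; (-308016)];
     [:: (-8382); 0; 0; (-73656); 667095; 62865; 429363; 233541];
     [:: (-125730); 31496; (-94488); 94488; 62865; 974471; (-125603); 94107];
     [:: 25146; 62992; (-188976); 139872; 429363; (-125603); 458327; (-79383)];
     [:: (-25146); (-94488); 283464; (-308016); 233541; 94107; (-79383); 394839]]);
(140937440, [:: [:: 39638655; 0; 0; 0; (-39638655); (-13212885); 39638655; 26425770];
     [:: 0; 38529392; 19074240; 39291216; 0; 6856416; (-23146848); 38148480];
     [:: 0; 19074240; 88273120; (-28167360); 39368000; 0; 10904640; 42695040];
     [:: 0; 39291216; (-28167360); 69921648; (-23620800); 20569248; (-32748384); 23976000];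
     [:: (-39638655); 0; 39368000; (-23620800); 59322655; 13212885; (-27828255); (-14615370)];
     [:: (-13212885); 6856416; 0; 20569248; 13212885; 127819783; 27925611; (-8808590)];
     [:: 39638655; (-23146848); 10904640; (-32748384); (-27828255); 27925611; 77392607; 8079690];
     [:: 26425770; 38148480; 42695040; 23976000; (-14615370); (-8808590); 8079690; 62851900]]);
(111940, [:: [:: 37060; 0; 0; 0; 13920; 46320; 6960; (-19680)];
     [:: 0; 50373; 16791; (-33582); 0; 16791; (-16791); 33582];
     [:: 0; 16791; 98237; 27406; (-7720); 5597; 9843; 11194];
     [:: 0; (-33582); 27406; 57128; 15440; (-11194); (-19686); (-22388)];
     [:: 13920; 0; (-7720); 15440; 102820; 0; 3160; 20880];
     [:: 46320; 16791; 5597; (-11194); 0; 67357; (-5597); (-19686)];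
     [:: 6960; (-16791); 9843; (-19686); 3160; (-5597); 103677; (-754)];
     [:: (-19680); 33582; 11194; (-22388); 20880; (-19686); (-754); 43048]]);
(600, [:: [:: 300; 0; 0; 0; 150; 150; (-150); (-150)];
     [:: 0; 575; (-60); (-45); 0; 75; 25; 50];
     [:: 0; (-60); 112; 84; 160; 20; 60; 120];
     [:: 0; (-45); 84; 63; 120; 15; 45; 90];
     [:: 150; 0; 160; 120; 325; 125; 75; 75];
     [:: 150; 75; 20; 15; 125; 100; 0; (-75)];
     [:: (-150); 25; 60; 45; 75; 0; 500; (-125)];
     [:: (-150); 50; 120; 90; 75; (-75); (-125); 425]]);
(16, [:: [:: 9; 0; 0; 0; 6; 3; 3; (-3)];
     [:: 0; 4; (-2); (-2); (-4); 2; 2; (-4)];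
     [:: 0; (-2); 5; (-3); 2; 3; (-5); 2];
     [:: 0; (-2); (-3); 5; 2; (-5); 3; 2];
     [:: 6; (-4); 2; 2; 8; 0; 0; 2];
     [:: 3; 2; 3; (-5); 0; 6; (-2); (-3)];
     [:: 3; 2; (-5); 3; 0; (-2); 6; (-3)];
     [:: (-3); (-4); 2; 2; 2; (-3); (-3); 5]]);
(13124646, [:: [:: 6076225; 0; 0; 0; 4860980; (-1458294); 3645735; (-1944392)];
     [:: 0; 4401621; (-1827000); (-4192020); (-931770); 3105900; 1242360; (-2329425)];
     [:: 0; (-1827000); 11779046; 1740000; (-686256); 2287520; 915008; (-1715640)];
     [:: 0; (-4192020); 1740000; 3992400; 887400; (-2958000); (-1183200); 2218500];
     [:: 4860980; (-931770); (-686256); 887400; 8263666; 0; (-2916588); (-2430490)];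
     [:: (-1458294); 3105900; 2287520; (-2958000); 0; 4860980; (-2430490); (-2916588)];
     [:: 3645735; 1242360; 915008; (-1183200); (-2916588); (-2430490); 9965009; 0];
     [:: (-1944392); (-2329425); (-1715640); 2218500; (-2430490); (-2916588); 0; 3159637]]);
(22392589600718750, [:: [:: 11196294800359375; 0; 0; (-4269293806635000); (-2684531928500000); (-6352846284093750); 5514226354226850; 5399822939603925];
     [:: 0; 11196294800359375; 0; 870084623421000; (-10719042376462500); 2983482217078125; (-272931079317510); (-852316269094430)];
     [:: 0; 0; 11196294800359375; 7321769656909500; (-291539024925000); (-4058861544281250); 5614543367221555; (-4864797743648010)];
     [:: (-4269293806635000); 870084623421000; 7321769656909500; 6483593819430000; 0; 0; 1547750216894700; (-5306572172210400)];
     [:: (-2684531928500000); (-10719042376462500); (-291539024925000); 0; 10913393968750000; (-1227400433437500); (-1207043548200000); (-352054368225000)];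
     [:: (-6352846284093750); 2983482217078125; (-4058861544281250); 0; (-1227400433437500); 5871065406609375; (-5236908516000000); (-1527431650500000)];
     [:: 5514226354226850; (-272931079317510); 5614543367221555; 1547750216894700; (-1207043548200000); (-5236908516000000); 5537928572596063; 240691380902784];
     [:: 5399822939603925; (-852316269094430); (-4864797743648010); (-5306572172210400); (-352054368225000); (-1527431650500000); 240691380902784; 4782902633692687]]);
(450, [:: [:: 225; 0; 0; (-192); (-47); (-92); 48; (-28)];
     [:: 0; 225; 0; (-6); 104; 44; 189; 46];
     [:: 0; 0; 225; 60; (-140); (-65); 60; 140];
     [:: (-192); (-6); 60; 180; 0; 60; (-30); 60];
     [:: (-47); 104; (-140); 0; 145; 80; 40; (-60)];
     [:: (-92); 44; (-65); 60; 80; 65; 0; (-20)];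
     [:: 48; 189; 60; (-30); 40; 0; 185; 70];
     [:: (-28); 46; 140; 60; (-60); (-20); 70; 100]]);
(228333, [:: [:: 135192; 0; 0; 6812; (-43492); 82530; (-28558); 55020];
     [:: 0; 157368; 21580; 0; (-73206); (-43492); 48804; 32702];
     [:: 0; 21580; 80676; 0; (-41832); 43492; 27888; (-83830)];
     [:: 6812; 0; 0; 58164; (-43492); (-33012); (-79910); (-22008)];
     [:: (-43492); (-73206); (-41832); (-43492); 90553; 0; 33864; 20916];
     [:: 82530; (-43492); 43492; (-33012); 0; 117769; 33012; (-15720)];
     [:: (-28558); 48804; 27888; (-79910); 33864; 33012; 133445; 8064];
     [:: 55020; 32702; (-83830); (-22008); 20916; (-15720); 8064; 140165]]);
(3204036, [:: [:: 2608898; 0; 0; (-841464); (-534006); 672452; 280488; (-169012)];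
     [:: 0; 2449953; 994356; 0; 447876; (-4455); 461241; (-667359)];
     [:: 0; 994356; 1407780; (-620136); 0; (-288684); (-994356); 288684];
     [:: (-841464); 0; (-620136); 1221480; 0; 574200; (-97092); (-994932)];
     [:: (-534006); 447876; 0; 0; 1739826; 964656; 447876; 964656];
     [:: 672452; (-4455); (-288684); 574200; 964656; 2265329; (-548691); (-172051)];
     [:: 280488; 461241; (-994356); (-97092); 447876; (-548691); 2482317; 17121];
     [:: (-169012); (-667359); 288684; (-994932); 964656; (-172051); 17121; 1844597]]);
(19488994766175, [:: [:: 16276263507751; 0; 0; (-3637945689686); (-1913464940679); (-5315180390775); 1913464940679; (-1866218892761)];
     [:: 0; 8068540252575; 7106847838200; 0; (-913884800400); (-630315853200); 2868010318800; 5672842678800];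
     [:: 0; 7106847838200; 14744871490800; 2106918353100; 0; (-526433173200); (-1055237667000); (-3689774853600)];
     [:: (-3637945689686); 0; 2106918353100; 1566142642471; 1559119581294; 0; (-2612578757844); (-1067505298904)];
     [:: (-1913464940679); (-913884800400); 0; 1559119581294; 17270543555391; (-4840663282875); 2659174976409; (-939807592881)];
     [:: (-5315180390775); (-630315853200); (-526433173200); 0; (-4840663282875); 8036411563425; 5407851635100; (-3230358990750)];
     [:: 1913464940679; 2868010318800; (-1055237667000); (-2612578757844); 2659174976409; 5407851635100; 15974331795141; 48949129056];
     [:: (-1866218892761); 5672842678800; (-3689774853600); (-1067505298904); (-939807592881); (-3230358990750); 48949129056; 15507869023321]]);
(1484370810, [:: [:: 675774216; 0; 0; (-208363428); (-227220552); 628674696; (-211947840); 105973920];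
     [:: 0; 1191508461; (-395832216); 0; (-72212634); (-24070878); 197916108; 383796777];
     [:: 0; (-395832216); 588673552; (-456729480); 0; (-228364740); (-65972036); 324785408];
     [:: (-208363428); 0; (-456729480); 852339474; 65038896; (-85972608); (-476882640); (-218288160)];
     [:: (-227220552); (-72212634); 0; 65038896; 1376303526; 223717572; 79480440; 176897682];
     [:: 628674696; (-24070878); (-228364740); (-85972608); 223717572; 887282334; 0; (-156152106)];
     [:: (-211947840); 197916108; (-65972036); (-476882640); 79480440; 0; 986751298; (-410910604)];
     [:: 105973920; 383796777; 324785408; (-218288160); 176897682; (-156152106); (-410910604); 863221189]]);
(12, [:: [:: 11; 0; 0; 1; (-2); (-1); 1; 2];
     [:: 0; 8; 2; 0; (-4); 2; (-2); (-2)];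
     [:: 0; 2; 7; 4; 2; (-1); (-3); 1];
     [:: 1; 0; 4; 3; 2; 1; (-1); 2];
     [:: (-2); (-4); 2; 2; 4; 0; 0; 2];
     [:: (-1); 2; (-1); 1; 0; 10; 2; 3];
     [:: 1; (-2); (-3); (-1); 0; 2; 2; 1];
     [:: 2; (-2); 1; 2; 2; 3; 1; 3]]);
(874125, [:: [:: 333925; 0; 0; (-140600); (-284012); (-156066); 233700; (-31350)];
     [:: 0; 156325; 192400; 0; (-14430); 221260; 115050; (-113100)];
     [:: 0; 192400; 444925; (-166500); 188700; 159100; 245100; 72300];
     [:: (-140600); 0; (-166500); 192400; (-45584); 156288; (-181200); (-156000)];
     [:: (-284012); (-14430); 188700; (-45584); 447700; 0; (-106716); 246912];
     [:: (-156066); 221260; 159100; 156288; 0; 447700; (-2688); (-260484)];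
     [:: 233700; 115050; 245100; (-181200); (-106716); (-2688); 299700; 0];
     [:: (-31350); (-113100); 72300; (-156000); 246912; (-260484); 0; 299700]]);
(40, [:: [:: 20; 0; 0; 12; 8; 8; 8; (-8)];
     [:: 0; 5; (-5); (-8); 3; 3; 8; 2];
     [:: 0; (-5); 5; 8; (-3); (-3); (-8); (-2)];
     [:: 12; (-8); 8; 20; 0; 0; (-8); (-8)];
     [:: 8; 3; (-3); 0; 5; 5; 8; (-2)];
     [:: 8; 3; (-3); 0; 5; 5; 8; (-2)];
     [:: 8; 8; (-8); (-8); 8; 8; 16; 0];
     [:: (-8); 2; (-2); (-8); (-2); (-2); 0; 4]])].
Close Scope Z_scope.

(* Entry p of row ci, when class ci has fewer than 5 edges and edge number p is not one of its
   edges: the class cj obtained by adding that edge, and the relabelling onto representative cj.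
   Other entries are unused placeholders (0, [::]). *)
Definition extension_table : seq (seq (nat * seq nat)) := [::
[:: (1, [:: 0; 1; 2; 3; 4; 5; 6; 7]); (1, [:: 0; 2; 1; 3; 4; 5; 6; 7]); (1, [:: 0; 2; 3; 1; 4; 5; 6; 7]); (1, [:: 0; 2; 3; 4; 1; 5; 6; 7]); (1, [:: 0; 2; 3; 4; 5; 1; 6; 7]); (1, [:: 0; 2; 3; 4; 5; 6; 1; 7]); (1, [:: 0; 2; 3; 4; 5; 6; 7; 1]); (1, [:: 2; 0; 1; 3; 4; 5; 6; 7]); (1, [:: 2; 0; 3; 1; 4; 5; 6; 7]); (1, [:: 2; 0; 3; 4; 1; 5; 6; 7]); (1, [:: 2; 0; 3; 4; 5; 1; 6; 7]); (1, [:: 2; 0; 3; 4; 5; 6; 1; 7]); (1, [:: 2; 0; 3; 4; 5; 6; 7; 1]); (1, [:: 2; 3; 0; 1; 4; 5; 6; 7]); (1, [:: 2; 3; 0; 4; 1; 5; 6; 7]); (1, [:: 2; 3; 0; 4; 5; 1; 6; 7]); (1, [:: 2; 3; 0; 4; 5; 6; 1; 7]); (1, [:: 2; 3; 0; 4; 5; 6; 7; 1]); (1, [:: 2; 3; 4; 0; 1; 5; 6; 7]); (1, [:: 2; 3; 4; 0; 5; 1; 6; 7]); (1, [:: 2; 3; 4; 0; 5; 6; 1; 7]); (1, [:: 2; 3; 4; 0; 5; 6; 7; 1]); (1, [:: 2; 3; 4; 5; 0; 1; 6; 7]); (1, [:: 2; 3; 4; 5; 0; 6; 1; 7]); (1,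 [:: 2; 3; 4; 5; 0; 6; 7; 1]); (1, [:: 2; 3; 4; 5; 6; 0; 1; 7]); (1, [:: 2; 3; 4; 5; 6; 0; 7; 1]); (1, [:: 2; 3; 4; 5; 6; 7; 0; 1])];
[:: (0, [::]); (2, [:: 0; 1; 2; 3; 4; 5; 6; 7]); (2, [:: 0; 1; 3; 2; 4; 5; 6; 7]); (2, [:: 0; 1; 3; 4; 2; 5; 6; 7]); (2, [:: 0; 1; 3; 4; 5; 2; 6; 7]); (2, [:: 0; 1; 3; 4; 5; 6; 2; 7]); (2, [:: 0; 1; 3; 4; 5; 6; 7; 2]); (2, [:: 1; 0; 2; 3; 4; 5; 6; 7]); (2, [:: 1; 0; 3; 2; 4; 5; 6; 7]); (2, [:: 1; 0; 3; 4; 2; 5; 6; 7]); (2, [:: 1; 0; 3; 4; 5; 2; 6; 7]); (2, [:: 1; 0; 3; 4; 5; 6; 2; 7]); (2, [:: 1; 0; 3; 4; 5; 6; 7; 2]); (3, [:: 0; 1; 2; 3; 4; 5; 6; 7]); (3, [:: 0; 1; 2; 4; 3; 5; 6; 7]); (3, [:: 0; 1; 2; 4; 5; 3; 6; 7]); (3, [:: 0; 1; 2; 4; 5; 6; 3; 7]); (3, [:: 0; 1; 2; 4; 5; 6; 7; 3]); (3, [:: 0; 1; 4; 2; 3; 5; 6; 7]); (3, [:: 0; 1; 4; 2; 5; 3; 6; 7]); (3, [:: 0; 1; 4; 2; 5; 6; 3; 7]); (3, [:: 0; 1; 4; 2; 5; 6; 7; 3]); (3, [:: 0; 1; 4; 5;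 2; 3; 6; 7]); (3, [:: 0; 1; 4; 5; 2; 6; 3; 7]); (3, [:: 0; 1; 4; 5; 2; 6; 7; 3]); (3, [:: 0; 1; 4; 5; 6; 2; 3; 7]); (3, [:: 0; 1; 4; 5; 6; 2; 7; 3]); (3, [:: 0; 1; 4; 5; 6; 7; 2; 3])];
[:: (0, [::]); (0, [::]); (4, [:: 0; 1; 2; 3; 4; 5; 6; 7]); (4, [:: 0; 1; 2; 4; 3; 5; 6; 7]); (4, [:: 0; 1; 2; 4; 5; 3; 6; 7]); (4, [:: 0; 1; 2; 4; 5; 6; 3; 7]); (4, [:: 0; 1; 2; 4; 5; 6; 7; 3]); (5, [:: 0; 1; 2; 3; 4; 5; 6; 7]); (6, [:: 0; 1; 2; 3; 4; 5; 6; 7]); (6, [:: 0; 1; 2; 4; 3; 5; 6; 7]); (6, [:: 0; 1; 2; 4; 5; 3; 6; 7]); (6, [:: 0; 1; 2; 4; 5; 6; 3; 7]); (6, [:: 0; 1; 2; 4; 5; 6; 7; 3]); (6, [:: 0; 2; 1; 3; 4; 5; 6; 7]); (6, [:: 0; 2; 1; 4; 3; 5; 6; 7]); (6, [:: 0; 2; 1; 4; 5; 3; 6; 7]); (6, [:: 0; 2; 1; 4; 5; 6; 3; 7]); (6, [:: 0; 2; 1; 4; 5; 6; 7; 3]); (7, [:: 0; 1; 2; 3; 4; 5; 6; 7]); (7, [:: 0; 1; 2; 3; 5; 4; 6; 7]); (7, [:: 0; 1; 2; 3; 5; 6; 4; 7]); (7, [:: 0; 1; 2; 3; 5; 6; 7;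 4]); (7, [:: 0; 1; 2; 5; 3; 4; 6; 7]); (7, [:: 0; 1; 2; 5; 3; 6; 4; 7]); (7, [:: 0; 1; 2; 5; 3; 6; 7; 4]); (7, [:: 0; 1; 2; 5; 6; 3; 4; 7]); (7, [:: 0; 1; 2; 5; 6; 3; 7; 4]); (7, [:: 0; 1; 2; 5; 6; 7; 3; 4])];
[:: (0, [::]); (6, [:: 0; 2; 1; 3; 4; 5; 6; 7]); (6, [:: 0; 2; 3; 1; 4; 5; 6; 7]); (7, [:: 0; 1; 3; 4; 2; 5; 6; 7]); (7, [:: 0; 1; 3; 4; 5; 2; 6; 7]); (7, [:: 0; 1; 3; 4; 5; 6; 2; 7]); (7, [:: 0; 1; 3; 4; 5; 6; 7; 2]); (6, [:: 2; 0; 1; 3; 4; 5; 6; 7]); (6, [:: 2; 0; 3; 1; 4; 5; 6; 7]); (7, [:: 1; 0; 3; 4; 2; 5; 6; 7]); (7, [:: 1; 0; 3; 4; 5; 2; 6; 7]); (7, [:: 1; 0; 3; 4; 5; 6; 2; 7]); (7, [:: 1; 0; 3; 4; 5; 6; 7; 2]); (0, [::]); (7, [:: 3; 4; 0; 1; 2; 5; 6; 7]); (7, [:: 3; 4; 0; 1; 5; 2; 6; 7]); (7, [:: 3; 4; 0; 1; 5; 6; 2; 7]); (7, [:: 3; 4; 0; 1; 5; 6; 7; 2]); (7, [:: 3; 4; 1; 0; 2; 5; 6; 7]); (7, [:: 3; 4; 1; 0; 5; 2; 6; 7]); (7, [:: 3; 4; 1; 0; 5; 6; 2; 7]); (7,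 [:: 3; 4; 1; 0; 5; 6; 7; 2]); (8, [:: 0; 1; 2; 3; 4; 5; 6; 7]); (8, [:: 0; 1; 2; 3; 4; 6; 5; 7]); (8, [:: 0; 1; 2; 3; 4; 6; 7; 5]); (8, [:: 0; 1; 2; 3; 6; 4; 5; 7]); (8, [:: 0; 1; 2; 3; 6; 4; 7; 5]); (8, [:: 0; 1; 2; 3; 6; 7; 4; 5])];
[:: (0, [::]); (0, [::]); (0, [::]); (9, [:: 0; 1; 2; 3; 4; 5; 6; 7]); (9, [:: 0; 1; 2; 3; 5; 4; 6; 7]); (9, [:: 0; 1; 2; 3; 5; 6; 4; 7]); (9, [:: 0; 1; 2; 3; 5; 6; 7; 4]); (10, [:: 0; 1; 2; 3; 4; 5; 6; 7]); (10, [:: 0; 1; 3; 2; 4; 5; 6; 7]); (11, [:: 0; 1; 2; 3; 4; 5; 6; 7]); (11, [:: 0; 1; 2; 3; 5; 4; 6; 7]); (11, [:: 0; 1; 2; 3; 5; 6; 4; 7]); (11, [:: 0; 1; 2; 3; 5; 6; 7; 4]); (10, [:: 0; 3; 1; 2; 4; 5; 6; 7]); (11, [:: 0; 2; 1; 3; 4; 5; 6; 7]); (11, [:: 0; 2; 1; 3; 5; 4; 6; 7]); (11, [:: 0; 2; 1; 3; 5; 6; 4; 7]); (11, [:: 0; 2; 1; 3; 5; 6; 7; 4]); (11, [:: 0; 2; 3; 1; 4; 5; 6; 7]); (11, [:: 0; 2; 3; 1; 5; 4; 6; 7]); (11, [:: 0; 2; 3; 1; 5; 6; 4; 7]); (11,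 [:: 0; 2; 3; 1; 5; 6; 7; 4]); (12, [:: 0; 1; 2; 3; 4; 5; 6; 7]); (12, [:: 0; 1; 2; 3; 4; 6; 5; 7]); (12, [:: 0; 1; 2; 3; 4; 6; 7; 5]); (12, [:: 0; 1; 2; 3; 6; 4; 5; 7]); (12, [:: 0; 1; 2; 3; 6; 4; 7; 5]); (12, [:: 0; 1; 2; 3; 6; 7; 4; 5])];
[:: (0, [::]); (0, [::]); (10, [:: 0; 1; 2; 3; 4; 5; 6; 7]); (10, [:: 0; 1; 2; 4; 3; 5; 6; 7]); (10, [:: 0; 1; 2; 4; 5; 3; 6; 7]); (10, [:: 0; 1; 2; 4; 5; 6; 3; 7]); (10, [:: 0; 1; 2; 4; 5; 6; 7; 3]); (0, [::]); (10, [:: 1; 0; 2; 3; 4; 5; 6; 7]); (10, [:: 1; 0; 2; 4; 3; 5; 6; 7]); (10, [:: 1; 0; 2; 4; 5; 3; 6; 7]); (10, [:: 1; 0; 2; 4; 5; 6; 3; 7]); (10, [:: 1; 0; 2; 4; 5; 6; 7; 3]); (10, [:: 1; 2; 0; 3; 4; 5; 6; 7]); (10, [:: 1; 2; 0; 4; 3; 5; 6; 7]); (10, [:: 1; 2; 0; 4; 5; 3; 6; 7]); (10, [:: 1; 2; 0; 4; 5; 6; 3; 7]); (10, [:: 1; 2; 0; 4; 5; 6; 7; 3]); (13, [:: 0; 1; 2; 3; 4; 5; 6; 7]); (13, [:: 0; 1; 2; 3; 5; 4; 6; 7]); (13, [:: 0; 1; 2; 3; 5; 6; 4; 7]); (13,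 [:: 0; 1; 2; 3; 5; 6; 7; 4]); (13, [:: 0; 1; 2; 5; 3; 4; 6; 7]); (13, [:: 0; 1; 2; 5; 3; 6; 4; 7]); (13, [:: 0; 1; 2; 5; 3; 6; 7; 4]); (13, [:: 0; 1; 2; 5; 6; 3; 4; 7]); (13, [:: 0; 1; 2; 5; 6; 3; 7; 4]); (13, [:: 0; 1; 2; 5; 6; 7; 3; 4])];
[:: (0, [::]); (0, [::]); (10, [:: 0; 1; 3; 2; 4; 5; 6; 7]); (11, [:: 0; 1; 2; 4; 3; 5; 6; 7]); (11, [:: 0; 1; 2; 4; 5; 3; 6; 7]); (11, [:: 0; 1; 2; 4; 5; 6; 3; 7]); (11, [:: 0; 1; 2; 4; 5; 6; 7; 3]); (10, [:: 1; 0; 2; 3; 4; 5; 6; 7]); (0, [::]); (11, [:: 1; 0; 4; 2; 3; 5; 6; 7]); (11, [:: 1; 0; 4; 2; 5; 3; 6; 7]); (11, [:: 1; 0; 4; 2; 5; 6; 3; 7]); (11, [:: 1; 0; 4; 2; 5; 6; 7; 3]); (14, [:: 0; 1; 2; 3; 4; 5; 6; 7]); (15, [:: 0; 1; 2; 3; 4; 5; 6; 7]); (15, [:: 0; 1; 2; 3; 5; 4; 6; 7]); (15, [:: 0; 1; 2; 3; 5; 6; 4; 7]); (15, [:: 0; 1; 2; 3; 5; 6; 7; 4]); (15, [:: 1; 0; 3; 2; 4; 5; 6; 7]); (15, [:: 1; 0; 3; 2; 5; 4; 6; 7]); (15, [:: 1; 0; 3; 2; 5; 6; 4; 7]); (15,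 [:: 1; 0; 3; 2; 5; 6; 7; 4]); (16, [:: 0; 1; 2; 3; 4; 5; 6; 7]); (16, [:: 0; 1; 2; 3; 4; 6; 5; 7]); (16, [:: 0; 1; 2; 3; 4; 6; 7; 5]); (16, [:: 0; 1; 2; 3; 6; 4; 5; 7]); (16, [:: 0; 1; 2; 3; 6; 4; 7; 5]); (16, [:: 0; 1; 2; 3; 6; 7; 4; 5])];
[:: (0, [::]); (0, [::]); (11, [:: 0; 2; 3; 1; 4; 5; 6; 7]); (11, [:: 0; 2; 3; 4; 1; 5; 6; 7]); (12, [:: 0; 1; 2; 4; 5; 3; 6; 7]); (12, [:: 0; 1; 2; 4; 5; 6; 3; 7]); (12, [:: 0; 1; 2; 4; 5; 6; 7; 3]); (13, [:: 0; 1; 2; 3; 4; 5; 6; 7]); (15, [:: 1; 0; 3; 2; 4; 5; 6; 7]); (15, [:: 1; 0; 3; 4; 2; 5; 6; 7]); (16, [:: 0; 1; 2; 4; 5; 3; 6; 7]); (16, [:: 0; 1; 2; 4; 5; 6; 3; 7]); (16, [:: 0; 1; 2; 4; 5; 6; 7; 3]); (15, [:: 1; 3; 0; 2; 4; 5; 6; 7]); (15, [:: 1; 3; 0; 4; 2; 5; 6; 7]); (16, [:: 0; 2; 1; 4; 5; 3; 6; 7]); (16, [:: 0; 2; 1; 4; 5; 6; 3; 7]); (16, [:: 0; 2; 1; 4; 5; 6; 7; 3]); (0, [::]); (17, [:: 0; 1; 2; 3; 4; 5; 6; 7]); (17, [:: 0; 1; 2; 3; 4; 6; 5; 7]); (17,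 [:: 0; 1; 2; 3; 4; 6; 7; 5]); (17, [:: 0; 1; 2; 4; 3; 5; 6; 7]); (17, [:: 0; 1; 2; 4; 3; 6; 5; 7]); (17, [:: 0; 1; 2; 4; 3; 6; 7; 5]); (18, [:: 0; 1; 2; 3; 4; 5; 6; 7]); (18, [:: 0; 1; 2; 3; 4; 5; 7; 6]); (18, [:: 0; 1; 2; 3; 4; 7; 5; 6])];
[:: (0, [::]); (16, [:: 0; 2; 1; 3; 4; 5; 6; 7]); (16, [:: 0; 2; 3; 1; 4; 5; 6; 7]); (16, [:: 0; 2; 4; 5; 1; 3; 6; 7]); (16, [:: 0; 2; 4; 5; 3; 1; 6; 7]); (18, [:: 0; 1; 3; 4; 5; 6; 2; 7]); (18, [:: 0; 1; 3; 4; 5; 6; 7; 2]); (16, [:: 2; 0; 1; 3; 4; 5; 6; 7]); (16, [:: 2; 0; 3; 1; 4; 5; 6; 7]); (16, [:: 2; 0; 4; 5; 1; 3; 6; 7]); (16, [:: 2; 0; 4; 5; 3; 1; 6; 7]); (18, [:: 1; 0; 3; 4; 5; 6; 2; 7]); (18, [:: 1; 0; 3; 4; 5; 6; 7; 2]); (0, [::]); (16, [:: 4; 5; 0; 2; 1; 3; 6; 7]); (16, [:: 4; 5; 0; 2; 3; 1; 6; 7]); (18, [:: 3; 4; 0; 1; 5; 6; 2; 7]); (18, [:: 3; 4; 0; 1; 5; 6; 7; 2]); (16, [:: 4; 5; 2; 0; 1; 3; 6; 7]); (16, [:: 4; 5; 2; 0; 3; 1; 6; 7]); (18, [:: 3;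 4; 1; 0; 5; 6; 2; 7]); (18, [:: 3; 4; 1; 0; 5; 6; 7; 2]); (0, [::]); (18, [:: 3; 4; 5; 6; 0; 1; 2; 7]); (18, [:: 3; 4; 5; 6; 0; 1; 7; 2]); (18, [:: 3; 4; 5; 6; 1; 0; 2; 7]); (18, [:: 3; 4; 5; 6; 1; 0; 7; 2]); (19, [:: 0; 1; 2; 3; 4; 5; 6; 7])];
[:: (0, [::]); (0, [::]); (0, [::]); (0, [::]); (20, [:: 0; 1; 2; 3; 4; 5; 6; 7]); (20, [:: 0; 1; 2; 3; 4; 6; 5; 7]); (20, [:: 0; 1; 2; 3; 4; 6; 7; 5]); (21, [:: 0; 1; 2; 3; 4; 5; 6; 7]); (21, [:: 0; 1; 3; 2; 4; 5; 6; 7]); (21, [:: 0; 1; 3; 4; 2; 5; 6; 7]); (22, [:: 0; 1; 2; 3; 4; 5; 6; 7]); (22, [:: 0; 1; 2; 3; 4; 6; 5; 7]); (22, [:: 0; 1; 2; 3; 4; 6; 7; 5]); (21, [:: 0; 3; 1; 2; 4; 5; 6; 7]); (21, [:: 0; 3; 1; 4; 2; 5; 6; 7]); (22, [:: 0; 2; 1; 3; 4; 5; 6; 7]); (22, [:: 0; 2; 1; 3; 4; 6; 5; 7]); (22, [:: 0; 2; 1; 3; 4; 6; 7; 5]); (21, [:: 0; 3; 4; 1; 2; 5; 6; 7]); (22, [:: 0; 2; 3; 1; 4; 5; 6; 7]); (22, [:: 0; 2; 3; 1; 4; 6; 5; 7]); (22, [:: 0; 2; 3; 1; 4; 6; 7;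 5]); (22, [:: 0; 2; 3; 4; 1; 5; 6; 7]); (22, [:: 0; 2; 3; 4; 1; 6; 5; 7]); (22, [:: 0; 2; 3; 4; 1; 6; 7; 5]); (23, [:: 0; 1; 2; 3; 4; 5; 6; 7]); (23, [:: 0; 1; 2; 3; 4; 5; 7; 6]); (23, [:: 0; 1; 2; 3; 4; 7; 5; 6])];
[:: (0, [::]); (0, [::]); (0, [::]); (21, [:: 0; 1; 2; 3; 4; 5; 6; 7]); (21, [:: 0; 1; 2; 3; 5; 4; 6; 7]); (21, [:: 0; 1; 2; 3; 5; 6; 4; 7]); (21, [:: 0; 1; 2; 3; 5; 6; 7; 4]); (0, [::]); (24, [:: 0; 1; 2; 3; 4; 5; 6; 7]); (25, [:: 0; 1; 2; 3; 4; 5; 6; 7]); (25, [:: 0; 1; 2; 3; 5; 4; 6; 7]); (25, [:: 0; 1; 2; 3; 5; 6; 4; 7]); (25, [:: 0; 1; 2; 3; 5; 6; 7; 4]); (24, [:: 0; 2; 1; 3; 4; 5; 6; 7]); (25, [:: 0; 2; 1; 3; 4; 5; 6; 7]); (25, [:: 0; 2; 1; 3; 5; 4; 6; 7]); (25, [:: 0; 2; 1; 3; 5; 6; 4; 7]); (25, [:: 0; 2; 1; 3; 5; 6; 7; 4]); (26, [:: 0; 1; 2; 3; 4; 5; 6; 7]); (26, [:: 0; 1; 2; 3; 5; 4; 6; 7]); (26, [:: 0; 1; 2; 3; 5; 6; 4; 7]); (26, [:: 0; 1; 2; 3; 5; 6; 7; 4]); (27, [:: 0; 1; 2; 3; 4;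 5; 6; 7]); (27, [:: 0; 1; 2; 3; 4; 6; 5; 7]); (27, [:: 0; 1; 2; 3; 4; 6; 7; 5]); (27, [:: 0; 1; 2; 3; 6; 4; 5; 7]); (27, [:: 0; 1; 2; 3; 6; 4; 7; 5]); (27, [:: 0; 1; 2; 3; 6; 7; 4; 5])];
[:: (0, [::]); (0, [::]); (0, [::]); (21, [:: 0; 1; 3; 4; 2; 5; 6; 7]); (22, [:: 0; 1; 2; 3; 5; 4; 6; 7]); (22, [:: 0; 1; 2; 3; 5; 6; 4; 7]); (22, [:: 0; 1; 2; 3; 5; 6; 7; 4]); (25, [:: 0; 1; 2; 3; 4; 5; 6; 7]); (25, [:: 0; 1; 3; 2; 4; 5; 6; 7]); (0, [::]); (28, [:: 0; 1; 2; 3; 4; 5; 6; 7]); (28, [:: 0; 1; 2; 3; 4; 6; 5; 7]); (28, [:: 0; 1; 2; 3; 4; 6; 7; 5]); (26, [:: 0; 3; 1; 2; 4; 5; 6; 7]); (29, [:: 0; 1; 2; 3; 4; 5; 6; 7]); (30, [:: 0; 1; 2; 3; 4; 5; 6; 7]); (30, [:: 0; 1; 2; 3; 4; 6; 5; 7]); (30, [:: 0; 1; 2; 3; 4; 6; 7; 5]); (29, [:: 0; 1; 3; 2; 4; 5; 6; 7]); (30, [:: 0; 1; 3; 2; 4; 5; 6; 7]); (30, [:: 0; 1; 3; 2; 4; 6; 5; 7]); (30, [:: 0; 1; 3; 2; 4; 6; 7; 5]); (31, [:: 0; 1; 2; 3; 4; 5; 6; 7]); (31, [:: 0; 1; 2;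 3; 4; 6; 5; 7]); (31, [:: 0; 1; 2; 3; 4; 6; 7; 5]); (32, [:: 0; 1; 2; 3; 4; 5; 6; 7]); (32, [:: 0; 1; 2; 3; 4; 5; 7; 6]); (32, [:: 0; 1; 2; 3; 4; 7; 5; 6])];
[:: (0, [::]); (0, [::]); (0, [::]); (22, [:: 0; 2; 3; 4; 1; 5; 6; 7]); (22, [:: 0; 2; 3; 4; 5; 1; 6; 7]); (23, [:: 0; 1; 2; 3; 5; 6; 4; 7]); (23, [:: 0; 1; 2; 3; 5; 6; 7; 4]); (27, [:: 0; 1; 2; 3; 4; 5; 6; 7]); (27, [:: 0; 1; 3; 2; 4; 5; 6; 7]); (31, [:: 0; 1; 2; 3; 4; 5; 6; 7]); (31, [:: 0; 1; 2; 3; 5; 4; 6; 7]); (32, [:: 0; 1; 2; 3; 5; 6; 4; 7]); (32, [:: 0; 1; 2; 3; 5; 6; 7; 4]); (27, [:: 0; 3; 1; 2; 4; 5; 6; 7]); (31, [:: 0; 2; 1; 3; 4; 5; 6; 7]); (31, [:: 0; 2; 1; 3; 5; 4; 6; 7]); (32, [:: 0; 2; 1; 3; 5; 6; 4; 7]); (32, [:: 0; 2; 1; 3; 5; 6; 7; 4]); (31, [:: 0; 2; 3; 1; 4; 5; 6; 7]); (31, [:: 0; 2; 3; 1; 5; 4; 6; 7]); (32, [:: 0; 2; 3; 1; 5; 6; 4; 7]); (32, [:: 0; 2; 3; 1; 5; 6; 7; 4]); (0, [::]); (33, [:: 0; 1; 2; 3; 4; 5; 6; 7]); (33, [:: 0;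 1; 2; 3; 4; 5; 7; 6]); (33, [:: 0; 1; 2; 3; 5; 4; 6; 7]); (33, [:: 0; 1; 2; 3; 5; 4; 7; 6]); (34, [:: 0; 1; 2; 3; 4; 5; 6; 7])];
[:: (0, [::]); (0, [::]); (26, [:: 0; 1; 2; 3; 4; 5; 6; 7]); (26, [:: 0; 1; 2; 4; 3; 5; 6; 7]); (27, [:: 0; 1; 2; 4; 5; 3; 6; 7]); (27, [:: 0; 1; 2; 4; 5; 6; 3; 7]); (27, [:: 0; 1; 2; 4; 5; 6; 7; 3]); (0, [::]); (26, [:: 1; 0; 2; 3; 4; 5; 6; 7]); (26, [:: 1; 0; 2; 4; 3; 5; 6; 7]); (27, [:: 1; 0; 2; 4; 5; 3; 6; 7]); (27, [:: 1; 0; 2; 4; 5; 6; 3; 7]); (27, [:: 1; 0; 2; 4; 5; 6; 7; 3]); (26, [:: 1; 2; 0; 3; 4; 5; 6; 7]); (26, [:: 1; 2; 0; 4; 3; 5; 6; 7]); (27, [:: 1; 2; 0; 4; 5; 3; 6; 7]); (27, [:: 1; 2; 0; 4; 5; 6; 3; 7]); (27, [:: 1; 2; 0; 4; 5; 6; 7; 3]); (0, [::]); (35, [:: 0; 1; 2; 3; 4; 5; 6; 7]); (35, [:: 0; 1; 2; 3; 4; 6; 5; 7]); (35, [:: 0; 1; 2; 3; 4; 6; 7; 5]); (35, [:: 0; 1; 2; 4; 3; 5; 6; 7]); (35, [:: 0; 1; 2; 4; 3; 6; 5; 7]); (35, [:: 0; 1; 2; 4; 3; 6; 7; 5]); (36,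 [:: 0; 1; 2; 3; 4; 5; 6; 7]); (36, [:: 0; 1; 2; 3; 4; 5; 7; 6]); (36, [:: 0; 1; 2; 3; 4; 7; 5; 6])];
[:: (0, [::]); (0, [::]); (24, [:: 0; 2; 3; 1; 4; 5; 6; 7]); (29, [:: 0; 1; 2; 4; 3; 5; 6; 7]); (29, [:: 0; 1; 2; 4; 5; 3; 6; 7]); (29, [:: 0; 1; 2; 4; 5; 6; 3; 7]); (29, [:: 0; 1; 2; 4; 5; 6; 7; 3]); (24, [:: 2; 0; 1; 3; 4; 5; 6; 7]); (0, [::]); (29, [:: 1; 0; 4; 2; 3; 5; 6; 7]); (29, [:: 1; 0; 4; 2; 5; 3; 6; 7]); (29, [:: 1; 0; 4; 2; 5; 6; 3; 7]); (29, [:: 1; 0; 4; 2; 5; 6; 7; 3]); (0, [::]); (29, [:: 1; 4; 0; 2; 3; 5; 6; 7]); (29, [:: 1; 4; 0; 2; 5; 3; 6; 7]); (29, [:: 1; 4; 0; 2; 5; 6; 3; 7]); (29, [:: 1; 4; 0; 2; 5; 6; 7; 3]); (29, [:: 4; 1; 2; 0; 3; 5; 6; 7]); (29, [:: 4; 1; 2; 0; 5; 3; 6; 7]); (29, [:: 4; 1; 2; 0; 5; 6; 3; 7]); (29, [:: 4; 1; 2; 0; 5; 6; 7; 3]); (37, [:: 0; 1; 2; 3; 4; 5; 6; 7]); (37, [:: 0; 1; 2; 3; 4; 6; 5; 7]); (37, [:: 0; 1; 2; 3; 4; 6; 7; 5]); (37, [:: 0; 1; 2; 3; 6; 4; 5;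 7]); (37, [:: 0; 1; 2; 3; 6; 4; 7; 5]); (37, [:: 0; 1; 2; 3; 6; 7; 4; 5])];
[:: (0, [::]); (0, [::]); (26, [:: 0; 1; 3; 2; 4; 5; 6; 7]); (26, [:: 0; 3; 1; 4; 2; 5; 6; 7]); (30, [:: 0; 1; 2; 4; 5; 3; 6; 7]); (30, [:: 0; 1; 2; 4; 5; 6; 3; 7]); (30, [:: 0; 1; 2; 4; 5; 6; 7; 3]); (25, [:: 2; 0; 1; 3; 4; 5; 6; 7]); (0, [::]); (29, [:: 1; 0; 4; 3; 2; 5; 6; 7]); (31, [:: 1; 0; 4; 2; 5; 3; 6; 7]); (31, [:: 1; 0; 4; 2; 5; 6; 3; 7]); (31, [:: 1; 0; 4; 2; 5; 6; 7; 3]); (29, [:: 1; 4; 0; 2; 3; 5; 6; 7]); (0, [::]); (31, [:: 1; 4; 0; 5; 2; 3; 6; 7]); (31, [:: 1; 4; 0; 5; 2; 6; 3; 7]); (31, [:: 1; 4; 0; 5; 2; 6; 7; 3]); (38, [:: 0; 1; 2; 3; 4; 5; 6; 7]); (39, [:: 0; 1; 2; 3; 4; 5; 6; 7]); (39, [:: 0; 1; 2; 3; 4; 6; 5; 7]); (39, [:: 0; 1; 2; 3; 4; 6; 7; 5]); (39, [:: 0; 2; 1; 4; 3; 5; 6; 7]); (39, [:: 0; 2; 1; 4; 3; 6; 5; 7]); (39, [:: 0; 2; 1; 4; 3; 6; 7; 5]); (40, [:: 0; 1; 2; 3; 4; 5; 6; 7]); (40, [:: 0; 1; 2; 3; 4;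 5; 7; 6]); (40, [:: 0; 1; 2; 3; 4; 7; 5; 6])];
[:: (0, [::]); (0, [::]); (27, [:: 0; 1; 3; 2; 4; 5; 6; 7]); (30, [:: 0; 1; 3; 4; 2; 5; 6; 7]); (30, [:: 0; 1; 3; 4; 5; 2; 6; 7]); (32, [:: 0; 1; 2; 4; 5; 6; 3; 7]); (32, [:: 0; 1; 2; 4; 5; 6; 7; 3]); (27, [:: 1; 0; 2; 3; 4; 5; 6; 7]); (0, [::]); (30, [:: 1; 0; 4; 3; 2; 5; 6; 7]); (30, [:: 1; 0; 4; 3; 5; 2; 6; 7]); (32, [:: 1; 0; 4; 2; 5; 6; 3; 7]); (32, [:: 1; 0; 4; 2; 5; 6; 7; 3]); (37, [:: 0; 1; 2; 3; 4; 5; 6; 7]); (39, [:: 0; 2; 1; 4; 3; 5; 6; 7]); (39, [:: 0; 2; 1; 4; 5; 3; 6; 7]); (40, [:: 0; 1; 2; 3; 5; 6; 4; 7]); (40, [:: 0; 1; 2; 3; 5; 6; 7; 4]); (39, [:: 2; 0; 4; 1; 3; 5; 6; 7]); (39, [:: 2; 0; 4; 1; 5; 3; 6; 7]); (40, [:: 1; 0; 3; 2; 5; 6; 4; 7]); (40, [:: 1; 0; 3; 2; 5; 6; 7; 4]); (0, [::]); (41, [:: 0; 1; 2; 3; 4; 5; 6; 7]); (41, [:: 0; 1; 2; 3; 4; 5; 7; 6]); (41, [:: 0; 1; 2; 3; 5; 4; 6; 7]); (41, [:: 0; 1; 2; 3; 5; 4; 7; 6]); (42, [:: 0; 1; 2;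 3; 4; 5; 6; 7])];
[:: (0, [::]); (0, [::]); (28, [:: 0; 2; 3; 1; 4; 5; 6; 7]); (31, [:: 0; 2; 3; 4; 1; 5; 6; 7]); (31, [:: 0; 2; 3; 4; 5; 1; 6; 7]); (33, [:: 0; 1; 2; 4; 5; 6; 3; 7]); (33, [:: 0; 1; 2; 4; 5; 6; 7; 3]); (35, [:: 0; 1; 2; 3; 4; 5; 6; 7]); (31, [:: 4; 1; 5; 0; 2; 3; 6; 7]); (39, [:: 2; 0; 4; 3; 1; 5; 6; 7]); (39, [:: 2; 0; 4; 3; 5; 1; 6; 7]); (41, [:: 0; 1; 2; 4; 5; 6; 3; 7]); (41, [:: 0; 1; 2; 4; 5; 6; 7; 3]); (31, [:: 4; 5; 1; 0; 2; 3; 6; 7]); (39, [:: 2; 4; 0; 3; 1; 5; 6; 7]); (39, [:: 2; 4; 0; 3; 5; 1; 6; 7]); (41, [:: 0; 2; 1; 4; 5; 6; 3; 7]); (41, [:: 0; 2; 1; 4; 5; 6; 7; 3]); (0, [::]); (0, [::]); (33, [:: 4; 5; 6; 0; 1; 2; 3; 7]); (33, [:: 4; 5; 6; 0; 1; 2; 7; 3]); (35, [:: 3; 4; 5; 0; 1; 2; 6; 7]); (41, [:: 4; 5; 6; 0; 1; 2; 3; 7]); (41, [:: 4; 5; 6; 0; 1; 2; 7; 3]); (41, [:: 4; 5; 6; 0; 2; 1; 3; 7]); (41, [:: 4; 5; 6; 0; 2; 1; 7; 3]); (43, [:: 0; 1; 2; 3; 4; 5; 6; 7])];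
[:: (0, [::]); (0, [::]); (32, [:: 0; 2; 3; 1; 4; 5; 6; 7]); (32, [:: 0; 2; 3; 4; 1; 5; 6; 7]); (32, [:: 0; 2; 3; 5; 6; 1; 4; 7]); (32, [:: 0; 2; 3; 5; 6; 4; 1; 7]); (34, [:: 0; 1; 2; 4; 5; 6; 7; 3]); (36, [:: 0; 1; 2; 3; 4; 5; 6; 7]); (40, [:: 1; 0; 3; 2; 4; 5; 6; 7]); (40, [:: 1; 0; 3; 4; 2; 5; 6; 7]); (40, [:: 1; 0; 3; 5; 6; 2; 4; 7]); (40, [:: 1; 0; 3; 5; 6; 4; 2; 7]); (42, [:: 0; 1; 2; 4; 5; 6; 7; 3]); (40, [:: 1; 3; 0; 2; 4; 5; 6; 7]); (40, [:: 1; 3; 0; 4; 2; 5; 6; 7]); (40, [:: 1; 3; 0; 5; 6; 2; 4; 7]); (40, [:: 1; 3; 0; 5; 6; 4; 2; 7]); (42, [:: 0; 2; 1; 4; 5; 6; 7; 3]); (0, [::]); (41, [:: 4; 5; 6; 0; 2; 1; 3; 7]); (41, [:: 4; 5; 6; 0; 2; 3; 1; 7]); (43, [:: 0; 1; 2; 3; 4; 6; 7; 5]); (41, [:: 4; 5; 6; 2; 0; 1; 3; 7]); (41, [:: 4; 5; 6; 2; 0; 3; 1; 7]); (43, [:: 0; 1; 2; 4; 3; 6; 7; 5]); (0, [::]); (43, [:: 0; 1; 2; 6; 7; 3; 4; 5]); (43, [:: 0; 1; 2; 6; 7; 4; 3; 5])];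
[:: (0, [::]); (42, [:: 0; 2; 1; 3; 4; 5; 6; 7]); (42, [:: 0; 2; 3; 1; 4; 5; 6; 7]); (42, [:: 0; 2; 4; 5; 1; 3; 6; 7]); (42, [:: 0; 2; 4; 5; 3; 1; 6; 7]); (42, [:: 0; 2; 4; 5; 6; 7; 1; 3]); (42, [:: 0; 2; 4; 5; 6; 7; 3; 1]); (42, [:: 2; 0; 1; 3; 4; 5; 6; 7]); (42, [:: 2; 0; 3; 1; 4; 5; 6; 7]); (42, [:: 2; 0; 4; 5; 1; 3; 6; 7]); (42, [:: 2; 0; 4; 5; 3; 1; 6; 7]); (42, [:: 2; 0; 4; 5; 6; 7; 1; 3]); (42, [:: 2; 0; 4; 5; 6; 7; 3; 1]); (0, [::]); (42, [:: 4; 5; 0; 2; 1; 3; 6; 7]); (42, [:: 4; 5; 0; 2; 3; 1; 6; 7]); (42, [:: 4; 5; 0; 2; 6; 7; 1; 3]); (42, [:: 4; 5; 0; 2; 6; 7; 3; 1]); (42, [:: 4; 5; 2; 0; 1; 3; 6; 7]); (42, [:: 4; 5; 2; 0; 3; 1; 6; 7]); (42, [:: 4; 5; 2; 0; 6; 7; 1; 3]); (42, [:: 4; 5; 2; 0; 6; 7; 3; 1]); (0, [::]); (42, [:: 4; 5; 6; 7; 0; 2; 1; 3]); (42, [:: 4; 5; 6; 7; 0; 2; 3; 1]); (42, [:: 4; 5; 6; 7; 2; 0; 1; 3]); (42, [:: 4; 5; 6; 7; 2; 0; 3; 1]); (0, [::])]].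

Definition class_scalar (ci : nat) : Z := (nth (Z0, [::]) class_mats ci).1.

Definition class_entry (ci i j : nat) : Z :=
  nth Z0 (nth [::] (nth (Z0, [::]) class_mats ci).2 i) j.

Definition class_code (ci : nat) : seq bool :=
  rel_code (fun i j => class_entry ci i j == Z0).

Definition class_sq_entry (ci i j : nat) : Z :=
  foldr (fun k acc => Z.add (Z.mul (class_entry ci i k) (class_entry ci k j)) acc) Z0 (iota 0 8).

Definition class_ok (ci : nat) : bool :=
  (class_scalar ci != Z0) &&
  all (fun i => all (fun j =>
    (class_entry ci i j == class_entry ci j i) &&
    (class_sq_entry ci i j == Z.mul (class_scalar ci) (class_entry ci i j))) (iota 0 8)) (iota 0 8).

Lemma class_mats_ok : all class_ok (iota 0 44).
Proof. by vm_compute. Qed.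

Definition extension_ok (ci p : nat) : bool :=
  let cs := class_code ci in
  [|| 5 <= count id cs, nth false cs p |
      let: (cj, t) := nth (0, [::]) (nth [::] extension_table ci) p in
      [&& cj < 44, count id (class_code cj) == (count id cs).+1 &
          iso_check (set_nth false cs p true) (class_code cj) t]].

Lemma extension_table_ok : all (fun ci => all (extension_ok ci) (iota 0 28)) (iota 0 44).
Proof. by vm_compute. Qed.

Lemma class_code0 : class_code 0 = nseq 28 false.
Proof. by vm_compute. Qed.

Lemma extension_step ci p : ci < 44 -> p < 28 -> count id (class_code ci) < 5 ->
  nth false (class_code ci) p = false ->
  exists cj t, [/\ cj < 44, count id (class_code cj) = (count id (class_code ci)).+1 &
                    iso_check (set_nth false (class_code ci) p true) (class_code cj) t].
Proof.
move=> ci44 p28 small nbit.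
have := allP (allP extension_table_ok ci _) p; rewrite !mem_iota ci44 p28 => /(_ isT isT).
rewrite /extension_ok leqNgt small nbit.
by case: nth => cj t /and3P[? /eqP ? ?]; exists cj, t.
Qed.

Lemma classify_small_graph k (H : {set {set 'I_8}}) : is_graph H -> #|H| = k -> k <= 5 ->
  exists ci f, [/\ ci < 44, count id (class_code ci) = k &
                    graph_iso (graph_code H) (class_code ci) f].
Proof.
elim: k H => [|k IHk] H gH Hk k5.
  exists 0, id; rewrite class_code0; split=> //; split=> // i j ij.
  by rewrite adj_graph_code // (cards0_eq Hk) in_set0 /adj nth_nseq if_same.
have [e eH] : exists e, e \in H by apply/set0Pn; rewrite -card_gt0 Hk.
have /cards2P[a [b [ab Eab]]] : #|e| == 2 by move/forallP/(_ e): gH; rewrite eH.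
subst e; set H' := H :\ [set a; b].
have gH' : is_graph H' by apply/forall_inP => e /setD1P[_ /(forall_inP gH)].
have cardH' : #|H'| = k by move: Hk; rewrite (cardsD1 [set a; b]) eH => -[].
have [ci [f [ci44 cnt [finj isof]]]] := IHk H' gH' cardH' (ltnW k5).
have fab : f a != f b by rewrite inj_eq.
have nbit : adj (class_code ci) (f a) (f b) = false.
  by rewrite -isof // adj_graph_code // setD11.
have small : count id (class_code ci) < 5 by rewrite cnt.
have [cj [t [cj44 cntj /iso_checkP isot]]] :=
  extension_step ci44 (edge_index_lt fab) small nbit.
exists cj, (relabel t \o f); split; [exact: cj44 | by rewrite cntj cnt | ].
have HE : H = [set a; b] |: H' by rewrite setD1K.
rewrite HE; exact: graph_iso_comp (graph_iso_add_edge ab (conj finj isof)) isot.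
Qed.

Local Open Scope ring_scope.

Definition class_mx (R : numDomainType) ci : 'M[R]_8 :=
  \matrix_(i, j) zr R (class_entry ci i j).

Section ClassMatrix.
Variables (R : numDomainType) (ci : nat).
Hypothesis ci44 : (ci < 44)%N.

Let class_okP : class_ok ci.
Proof. by apply: (allP class_mats_ok); rewrite mem_iota. Qed.

Lemma class_scalar_neq0 : zr R (class_scalar ci) != 0.
Proof. by rewrite zr_eq0; case/andP: class_okP. Qed.

Let class_entry_spec (i j : 'I_8) :
  class_entry ci i j = class_entry ci j i /\
  class_sq_entry ci i j = Z.mul (class_scalar ci) (class_entry ci i j).
Proof.
case/andP: class_okP => _ /allP/(_ i); rewrite mem_iota ltn_ord => /(_ isT) /allP/(_ j).
by rewrite mem_iota ltn_ord => /(_ isT) /andP[/eqP ? /eqP ?].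
Qed.

Lemma class_mx_sym : (class_mx R ci)^T = class_mx R ci.
Proof. by apply/matrixP => i j; rewrite !mxE (class_entry_spec j i).1. Qed.

Lemma class_mx_sq :
  class_mx R ci *m class_mx R ci = zr R (class_scalar ci) *: class_mx R ci.
Proof.
apply/matrixP => i j; rewrite !mxE -zrM -(class_entry_spec i j).2 zr_foldr.
rewrite -[iota 0 8]/(index_iota 0 8) big_mkord.
by apply: eq_bigr => k _; rewrite !mxE zrM.
Qed.

Lemma class_mx_pattern (i j : 'I_8) :
  i != j -> (class_mx R ci i j != 0) = ~~ adj (class_code ci) i j.
Proof.
move=> ij; rewrite mxE zr_eq0 adj_rel_code // => a b.
by rewrite (class_entry_spec a b).1.
Qed.

End ClassMatrix.

Lemma graph_iso_realized (R : realType) bs ci f : (ci < 44)%N ->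
  graph_iso bs (class_code ci) f ->
  exists c (A : 'M[R]_8), [/\ c != 0, A^T = A, A *m A = c *: A &
    forall i j, i != j -> (A i j != 0) = ~~ adj bs i j].
Proof.
move=> ci44 [finj isof]; exists (zr R (class_scalar ci)), (mxsub f f (class_mx R ci)).
split; first exact: class_scalar_neq0.
- by rewrite trmx_mxsub class_mx_sym.
- rewrite mxsub_mul_inj // class_mx_sq //.
  by apply/matrixP => i j; rewrite !mxE.
- by move=> i j ij; rewrite mxE class_mx_pattern ?inj_eq // isof.
Qed.

Theorem mainTheorem19 (R : realType) (H : {set {set 'I_8}}) :
  is_graph H -> (#|H| <= 5)%N -> q_eq R (Kn_minus H) 2.
Proof.
move=> gH H5.
have [ci [f [ci44 _ isoH]]] := classify_small_graph gH erefl H5.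
have [c [A [c0 symA AA patA]]] := graph_iso_realized R ci44 isoH.
have [j j0 jNH] := exists_non_neighbour (leq_ltn_trans H5 (isT : (5 < 7)%N)).
have inK (u v : 'I_8) : u != v -> ([set u; v] \in Kn_minus H) = ([set u; v] \notin H).
  by move=> uv; rewrite inE cards2 uv.
apply: (q_eq2_scaled_idempotent (A := A) (c := c) (i := ord0) (j := j)) => //.
- by split=> // u v uv; rewrite patA // adj_graph_code // inK.
- by rewrite eq_sym.
- by rewrite inK // eq_sym.
Qed.
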